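(* Let $d\ge3$ and let $G_0$ be the Green's function (with pole at $0$) of the free Laplacian on $\mathbb Z^d$. Then for every $x\in\mathbb Z^d$, $$\sum_{y\in\mathbb Z^d:\,|y-x|=1}|G_0(x)-G_0(y)|>0.$$
   Context: The free Laplacian on $\mathbb Z^d$ is $\Delta f(x)=\sum_{y:|y-x|=1}(f(x)-f(y))$ and its Green's function is $G_0(x)=\lim_{\alpha\downarrow0}((\Delta+\alpha)^{-1}1_0)(x)$, which is finite for $d\ge3$. *)

From HB Require Import structures.
From mathcomp Require Import all_boot all_order all_algebra.
From mathcomp Require Import all_classical all_reals all_analysis.
Set Implicit Arguments. Unset Strict Implicit. Unset Printing Implicit Defensive.
Import Order.TTheory GRing.Theory Num.Theory.
Local Open Scope ring_scope.

Definition lattice (d : nat) := 'I_d -> int.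

Definition lshift_pt (d : nat) (x : lattice d) (i : 'I_d) (s : int) : lattice d :=
  fun j => if j == i then x j + s else x j.

(* The neighbours y of x with |y - x| = 1 are exactly lshift_pt x i 1 and
   lshift_pt x i (-1), i < d.  Free Laplacian:
   (Delta f)(x) = sum_{|y-x|=1} (f x - f y). *)
Definition lap (R : realType) (d : nat) (f : lattice d -> R) (x : lattice d) : R :=
  \sum_(i < d) ((f x - f (lshift_pt x i 1)) + (f x - f (lshift_pt x i (-1)))).

Definition delta0 (R : realType) (d : nat) (x : lattice d) : R :=
  if [forall i, x i == 0] then 1 else 0.

(* g is the bounded solution of (Delta + a) g = 1_0, i.e. g = (Delta + a)^{-1} 1_0
   (for a > 0 this bounded solution is unique). *)
Definition is_resolvent0 (R : realType) (d : nat) (a : R) (g : lattice d -> R) : Prop :=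
  (exists M : R, forall x, `|g x| <= M) /\
  (forall x, lap g x + a * g x = delta0 R x).

From HB Require Import structures.
From mathcomp Require Import all_boot all_order all_algebra.
From mathcomp Require Import all_classical all_reals all_analysis.
From mathcomp Require Import zify ring lra.
Import Order.TTheory GRing.Theory Num.Theory.
Import numFieldNormedType.Exports.
Local Open Scope classical_set_scope.
Local Open Scope ring_scope.
Set Implicit Arguments. Unset Strict Implicit.

(* Fix x and a coordinate i, and let c = x_i.  Let sigma be the reflection of
   Z^d in the hyperplane z_i = c + 1/2 if c >= 0 (z_i = c - 1/2 if c < 0), so
   that sigma x = x + e_i (resp. x - e_i) is a neighbour of x, and let D be the
   closed half-space bounded by this hyperplane containing x and the origin.
   Then u = G0 - G0 o sigma is sigma-odd and Δu = 1_0 on D, because sigma is a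
   lattice symmetry which maps D away from the origin.
   1. Maximum principle for reflection-odd functions: a bounded sigma-odd v
      with (Δ + a) v >= 0 on D (a > 0) is nonnegative on D.  Applied to the
      resolvents Ga a - Ga a o sigma and passed to the limit a -> 0+, it
      gives u >= 0 on D.
   2. Strong minimum principle: a sigma-odd u >= 0 on D with Δu = 1_0 on D
      has no zero in D, since a zero spreads to the neighbours, hence along a
      path to the origin, where Δu(0) = 1 contradicts a local minimum.
   So G0 (sigma x) < G0 x and the term of the gradient sum in direction i is
   positive. *)

Section Lattice.
Variable d : nat.
Implicit Types z : lattice d.

Definition unit_step (t : int) : Prop := t = 1 \/ t = -1.

Definition l1norm (z : lattice d) : nat := (\sum_(j < d) `|z j|)%N.

Definition toward0 (n : int) : int := if 0 < n then -1 else 1.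

Lemma unit_step_toward0 n : unit_step (toward0 n).
Proof. by rewrite /toward0; case: ifP; [right|left]. Qed.

Lemma l1norm_toward0 z j : z j != 0 ->
  (l1norm (lshift_pt z j (toward0 (z j))) < l1norm z)%N.
Proof.
move=> zj0; rewrite /l1norm (bigD1 j) //= [X in (_ < X)%N](bigD1 j) //=.
rewrite (eq_bigr (fun k => `|z k|%N)) => [|k /negbTE kj]; last by rewrite /lshift_pt kj.
by rewrite ltn_add2r /lshift_pt eqxx /toward0; move: zj0; case: ifP; move: (z j); lia.
Qed.

End Lattice.

Section LatticeLaplacian.
Variables (R : realType) (d : nat).
Implicit Types (f g : lattice d -> R) (z : lattice d).

Lemma lapB f g z : lap (fun w => f w - g w) z = lap f z - lap g z.
Proof. by rewrite /lap -sumrB; apply: eq_bigr => j _; ring. Qed.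

Lemma delta0_ge0 z : 0 <= delta0 R z.
Proof. by rewrite /delta0; case: ifP. Qed.

Lemma lap_le_nbr_lb f z (m : R) :
  (forall j t, unit_step t -> m <= f (lshift_pt z j t)) ->
  lap f z <= 2 * d%:R * (f z - m).
Proof.
move=> hm; have -> : 2 * d%:R * (f z - m) = \sum_(j < d) ((f z - m) + (f z - m)).
  by rewrite sumr_const card_ord -mulr_natl; ring.
apply: ler_sum => j _; apply: lerD; rewrite lerD2l lerN2; apply: hm; by [left|right].
Qed.

Lemma lap_at_zero_min f z :
  f z = 0 -> (forall j t, unit_step t -> 0 <= f (lshift_pt z j t)) -> 0 <= lap f z ->
  lap f z = 0 /\ forall j t, unit_step t -> f (lshift_pt z j t) = 0.
Proof.
move=> fz0 hnb hlap.
pose S := \sum_(j < d) (f (lshift_pt z j 1) + f (lshift_pt z j (-1))).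
have pair_ge0 j : 0 <= f (lshift_pt z j 1) + f (lshift_pt z j (-1)).
  by apply: addr_ge0; apply: hnb; [left|right].
have lapS : lap f z = - S by rewrite /lap /S -sumrN; apply: eq_bigr => j _; rewrite fz0; ring.
have S0 : S = 0.
  by apply/eqP; rewrite eq_le -oppr_ge0 -lapS hlap sumr_ge0.
split=> [|j t [->|->]]; first by rewrite lapS S0 oppr0.
all: have /eqP := @psumr_eq0P _ _ xpredT _ (fun j _ => pair_ge0 j) S0 j isT.
all: rewrite paddr_eq0; try (apply: hnb; by [left|right]).
all: by case/andP=> /eqP ? /eqP.
Qed.

(* The Laplacian at a point is a finite combination of values, so it commutes
   with pointwise limits. *)
Lemma lap_cvg (T : Type) (F : set_system T) (FF : Filter F)
    (f : T -> lattice d -> R) g z :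
  (forall w, f s w @[s --> F] --> g w) -> lap (f s) z @[s --> F] --> lap g z.
Proof.
move=> hf; apply: cvg_big => [|j _]; first exact: add_continuous.
by apply: cvgD; apply: cvgB; apply: hf.
Qed.

End LatticeLaplacian.

Section Reflection.
Variables (d : nat) (i : 'I_d) (c : int) (b : bool).
Implicit Types (z : lattice d).

Definition side_step : int := if b then 1 else -1.

(* The reflection sigma in the hyperplane z_i = c + side_step/2. *)
Definition mirror z : lattice d :=
  fun j => if j == i then 2 * c + side_step - z j else z j.

(* The closed half-space D bounded by that hyperplane and containing z_i = c. *)
Definition near_side z : Prop := if b then z i <= c else c <= z i.

Lemma mirrorK z : mirror (mirror z) = z.
Proof. by apply: funext => j; rewrite /mirror; case: eqP => // _; lia. Qed.

Lemma mirror_boundary z : z i = c -> mirror z = lshift_pt z i side_step.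
Proof.
by move=> zic; apply: funext => j; rewrite /mirror /lshift_pt; case: eqP => [->|//]; lia.
Qed.

Lemma mirror_shift z j t :
  mirror (lshift_pt z j t) = lshift_pt (mirror z) j (if j == i then - t else t).
Proof.
apply: funext => k; rewrite /mirror /lshift_pt.
by have [<-|//] := eqVneq j k; case: (j == i); lia.
Qed.

(* sigma is a lattice symmetry, so it commutes with the Laplacian. *)
Lemma lap_mirror (R : realType) (g : lattice d -> R) z :
  lap (fun w => g (mirror w)) z = lap g (mirror z).
Proof.
rewrite /lap; apply: eq_bigr => j _; rewrite !mirror_shift.
by case: (j == i); rewrite ?opprK // addrC.
Qed.

Lemma near_side_nbr z j t : unit_step t -> near_side z ->
  near_side (lshift_pt z j t) \/ lshift_pt z j t = mirror z.
Proof.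
move=> ht; rewrite /near_side /mirror /side_step /lshift_pt.
have [<-|//] := eqVneq i j; last by left.
case: b ht => -[]-> zi; [case: (lerP (z i + 1) c)|case: (lerP (z i + -1) c)
  |case: (lerP c (z i + 1))|case: (lerP c (z i + -1))]; try by left.
all: by move=> h; right; apply: funext => k; case: eqP => [->|//]; lia.
Qed.

(* At a near-minimiser of v
   on D all neighbours are >= inf v (the one outside D equals -v > 0), which
   forces (Δ + a) v < 0 there if inf v < 0. *)
Lemma odd_resolvent_min_principle (R : realType) (a : R) (v : lattice d -> R) :
  0 < a -> (exists M, forall z, `|v z| <= M) -> (forall z, v (mirror z) = - v z) ->
  (forall z, near_side z -> 0 <= lap v z + a * v z) ->
  forall z, near_side z -> 0 <= v z.
Proof.
move=> a0 [M vM] v_odd hres.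
pose E := v @` near_side.
have E_lb : has_lbound E.
  by exists (- M) => _ [z _ <-]; have := vM z; rewrite ler_norml => /andP[].
have E_ne : E !=set0 by exists (v (fun=> c)), (fun=> c); rewrite /near_side; case: b.
pose m := inf E.
have m_le z : near_side z -> m <= v z by move=> zD; apply: ge_inf => //; exists z.
suff m_ge0 : 0 <= m by move=> z zD; exact: le_trans m_ge0 (m_le z zD).
rewrite leNgt; apply/negP => m_lt0.
have d_ge0 : 0 <= d%:R :> R by [].
have den_gt0 : 0 < 2 * d%:R + a by lra.
pose eps := - (a * m) / (2 * d%:R + a).
have eps_gt0 : 0 < eps by rewrite divr_gt0 // oppr_gt0 pmulr_rlt0.
have eps_def : (2 * d%:R + a) * eps = - (a * m) by rewrite /eps mulrC divfK ?gt_eqF.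
have eps_le : eps <= - m by rewrite ler_pdivrMr //; nra.
have [_ [z zD <-] vz_lt] := inf_adherent eps_gt0 (conj E_ne E_lb).
have nbr_ge : forall j t, unit_step t -> m <= v (lshift_pt z j t).
  move=> j t ht; case: (near_side_nbr j ht zD) => [|->]; first exact: m_le.
  rewrite v_odd; rewrite -/m in vz_lt; lra.
have := lap_le_nbr_lb nbr_ge; have := hres z zD; rewrite -/m in vz_lt; nra.
Qed.

Section OriginInD.
Hypothesis origin_near : near_side (fun=> 0).

(* Since D contains the origin, sigma maps D into the other half-space, which
   does not contain the origin. *)
Lemma delta0_mirror (R : realType) z : near_side z -> delta0 R (mirror z) = 0.
Proof.
move: origin_near; rewrite /near_side /delta0 => hc hz.
case: forallP => // /(_ i); rewrite /mirror eqxx /side_step => /eqP.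
by case: b hc hz; lia.
Qed.

Lemma near_side_toward0 z j : z j != 0 -> near_side z ->
  near_side (lshift_pt z j (toward0 (z j))).
Proof.
move: origin_near; rewrite /near_side /lshift_pt /toward0.
have [<-|//] := eqVneq i j.
by case: b; case: ifP; move: (z i); lia.
Qed.

(* A zero at z /= 0 spreads to all neighbours, in particular to
   one closer to the origin; at the origin Δu = 1 contradicts the local minimum. *)
Lemma odd_green_no_zero (R : realType) (u : lattice d -> R) :
  (forall z, u (mirror z) = - u z) -> (forall z, near_side z -> 0 <= u z) ->
  (forall z, near_side z -> lap u z = delta0 R z) ->
  forall z, near_side z -> u z != 0.
Proof.
move=> u_odd u_ge0 u_lap.
suff no_zero n : forall z, (l1norm z < n)%N -> near_side z -> u z != 0.
  by move=> z; exact: no_zero (l1norm z).+1 z (ltnSn _).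
elim: n => // n IH z z_lt zD; apply/eqP => uz0.
have nbr_ge0 j t : unit_step t -> 0 <= u (lshift_pt z j t).
  move=> ht; case: (near_side_nbr j ht zD) => [|->]; first exact: u_ge0.
  by rewrite u_odd uz0 oppr0.
have lap_ge0 : 0 <= lap u z by rewrite u_lap // delta0_ge0.
have [lap0 nbr0] := lap_at_zero_min uz0 nbr_ge0 lap_ge0.
move: lap0; rewrite u_lap // /delta0.
case: (boolP [forall k, z k == 0]) => [_ /eqP|/forallPn [j zj0] _]; first by rewrite oner_eq0.
have y_lt : (l1norm (lshift_pt z j (toward0 (z j))) < n)%N.
  exact: leq_trans (l1norm_toward0 zj0) _.
have := IH _ y_lt (near_side_toward0 zj0 zD).
by rewrite nbr0 ?eqxx //; exact: unit_step_toward0.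
Qed.

End OriginInD.
End Reflection.

Section GreenFunction.
Variables (R : realType) (d : nat) (Ga : R -> lattice d -> R) (G0 : lattice d -> R).
Hypothesis Ga_resolvent : forall a, 0 < a -> is_resolvent0 a (Ga a).
Hypothesis Ga_cvg : forall x, Ga a x @[a --> 0^'+] --> G0 x.

(* Passing to the limit a -> 0+ in (Δ + a) Ga = 1_0 gives Δ G0 = 1_0. *)
Lemma lap_G0 z : lap G0 z = delta0 R z.
Proof.
have to_lap : lap (Ga a) z + a * Ga a z @[a --> 0^'+] --> lap G0 z + 0 * G0 z.
  apply: cvgD; first exact: lap_cvg.
  apply: cvgM; last exact: Ga_cvg.
  exact: (cvg_at_right_filter (f := id) cvg_id).
have to_delta : lap (Ga a) z + a * Ga a z @[a --> 0^'+] --> delta0 R z.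
  apply: cvg_near_cst; near=> a.
  have a_gt0 : 0 < a by near: a; exact: nbhs_right_gt.
  by have [_ ->] := Ga_resolvent a_gt0.
have := cvg_lim (@Rhausdorff R) to_lap; rewrite (cvg_lim (@Rhausdorff R) to_delta).
by rewrite mul0r addr0 => ->.
Unshelve. all: by end_near. Qed.

Section Mirror.
Variables (i : 'I_d) (c : int) (b : bool).
Hypothesis origin_near : near_side i c b (fun=> 0).
Notation mirror := (mirror i c b).
Notation near_side := (near_side i c b).

(* The reflected difference of the resolvents is nonnegative on D by the
   maximum principle; so is its limit G0 - G0 o sigma. *)
Lemma G0_mirror_le z : near_side z -> G0 (mirror z) <= G0 z.
Proof.
move=> zD; rewrite -subr_ge0.
have diff_cvg : Ga a z - Ga a (mirror z) @[a --> 0^'+] --> G0 z - G0 (mirror z).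
  by apply: cvgB; apply: Ga_cvg.
apply: (closed_cvg _ (@closed_ge _ 0) _ _ diff_cvg); near=> a => /=.
have a_gt0 : 0 < a by near: a; exact: nbhs_right_gt.
have [[M GaM] Ga_eq] := Ga_resolvent a_gt0.
pose v w := Ga a w - Ga a (mirror w).
apply: (@odd_resolvent_min_principle _ i c b R a v a_gt0) => //.
- exists (M + M) => w; apply: le_trans (ler_normB _ _) _; exact: lerD.
- by move=> w; rewrite /v mirrorK opprB.
- move=> w wD; rewrite /v lapB lap_mirror.
  have := Ga_eq w; have := Ga_eq (mirror w); rewrite delta0_mirror //.
  have := delta0_ge0 R w; lra.
Unshelve. all: by end_near. Qed.

(* By the strong minimum principle the inequality is strict. *)
Lemma G0_mirror_lt z : near_side z -> G0 (mirror z) < G0 z.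
Proof.
move=> zD; rewrite lt_def G0_mirror_le // andbT -subr_eq0.
apply: (@odd_green_no_zero _ i c b origin_near R (fun w => G0 w - G0 (mirror w))) => //.
- by move=> w; rewrite mirrorK opprB.
- by move=> w wD; rewrite subr_ge0 G0_mirror_le.
- by move=> w wD; rewrite lapB lap_mirror !lap_G0 delta0_mirror ?subr0.
Qed.

End Mirror.
End GreenFunction.

Theorem mainTheorem17 (R : realType) (d : nat) (hd : (3 <= d)%N)
  (Ga : R -> lattice d -> R) (G0 : lattice d -> R) :
  (forall a : R, 0 < a -> is_resolvent0 a (Ga a)) ->
  (forall x : lattice d, Ga a x @[a --> 0^'+] --> G0 x) ->
  forall x : lattice d,
    0 < \sum_(i < d) (`|G0 x - G0 (lshift_pt x i 1)| + `|G0 x - G0 (lshift_pt x i (-1))|).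
Proof.
move=> Ga_resolvent Ga_cvg x.
(* Reflect x in the first coordinate, away from the origin. *)
pose i : 'I_d := Ordinal (leq_trans (isT : (0 < 3)%N) hd).
pose c := x i; pose b := (0 <= c).
have origin_near : near_side i c b (fun=> 0).
  by rewrite /near_side /b; case: lerP => // /ltW.
have xD : near_side i c b x by rewrite /near_side; case: ifP.
have := G0_mirror_lt Ga_resolvent Ga_cvg origin_near xD.
rewrite mirror_boundary // -subr_gt0 => gap.
have term_i : 0 < `|G0 x - G0 (lshift_pt x i 1)| + `|G0 x - G0 (lshift_pt x i (-1))|.
  move: gap; rewrite /side_step; case: ifP => _ gap.
  - by rewrite ltr_pwDl // gtr0_norm.
  - by rewrite ltr_pwDr // gtr0_norm.
rewrite (bigD1 i) //= ltr_pwDl //.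
by apply: sumr_ge0 => j _; apply: addr_ge0.
Qed.
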